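(* Let $d\ge 3$, let $q$ be a prime power, let $2\le k\le d/2$, and let $G$ be a group with $\mathrm{PSL}_d(q)\trianglelefteq G\le \mathrm{P}\Gamma\mathrm{L}_d(q)$, acting naturally on the set of $k$-dimensional subspaces of $\mathbb{F}_q^d$. Then $G$ is not $\mathrm{IBIS}$.
   Context: A base of a permutation group $G$ on $\Omega$ is a sequence $(\omega_1,\dots,\omega_\ell)$ of points with trivial pointwise stabilizer; it is irredundant if $G>G_{\omega_1}>\cdots>G_{\omega_1,\dots,\omega_\ell}=1$. $G$ is $\mathrm{IBIS}$ if all irredundant bases of $G$ have the same cardinality. *)

From HB Require Import structures.
From mathcomp Require Import all_boot all_order all_algebra all_fingroup all_field.
Set Implicit Arguments. Unset Strict Implicit. Unset Printing Implicit Defensive.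
Import GRing.Theory.
Local Open Scope ring_scope.

(* Points: k-dimensional subspaces of F^d, represented canonically by their
   row-space matrices <<M>>%MS (mxalgebra). *)
Definition is_ksub (F : fieldType) (d k : nat) (M : 'M[F]_d) : bool :=
  (<<M>>%MS == M) && (\rank M == k).

Definition ksub (F : finFieldType) (d k : nat) :=
  {M : 'M[F]_d | is_ksub k M}.

Definition slimage (F : fieldType) (d : nat) (sigma : F -> F) (A : 'M[F]_d)
  (U : 'M[F]_d) : 'M[F]_d := <<map_mx sigma U *m A>>%MS.

Definition PSL_on (F : finFieldType) (d k : nat) : {set {perm ksub F d k}} :=
  [set p : {perm ksub F d k} | [exists A : 'M[F]_d,
     (\det A == 1) && [forall U : ksub F d k, val (p U) == slimage id A (val U)]]].

(* p lies in PGammaL_d(q) (acting on k-subspaces): induced by a semilinear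
   map v |-> (v^sigma) *m A with A invertible and sigma a field automorphism
   (every ring endomorphism of a finite field is an automorphism). *)
Definition in_PGammaL (F : finFieldType) (d k : nat) (p : {perm ksub F d k}) : Prop :=
  exists (sigma : {rmorphism F -> F}) (A : 'M[F]_d),
    A \in unitmx /\ forall U : ksub F d k, val (p U) = slimage sigma A (val U).

Definition pstab (T : finType) (G : {set {perm T}}) (s : seq T) : {set {perm T}} :=
  G :&: [set g : {perm T} | all (fun x => g x == x) s].

Definition irredundant_base (T : finType) (G : {set {perm T}}) (s : seq T) : Prop :=
  (forall i, (i < size s)%N -> pstab G (take i.+1 s) \proper pstab G (take i s))
  /\ pstab G s = 1%g.

Definition IBIS (T : finType) (G : {set {perm T}}) : Prop :=
  forall s t : seq T, irredundant_base G s -> irredundant_base G t ->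
    size s = size t.

(* Let W_S be the span of the coordinate vectors e_i (i ∈ S), put
   R = {4, ..., k+1}, S_ab = {a,b} ∪ R and W_ab = W_(S_ab) for 0 ≤ a < b ≤ 3;
   these are k-subspaces since k + 2 ≤ d.  A semilinear map (σ, A) fixes W_S
   iff A is block triangular with respect to S, a condition stable under
   unions and intersections of S.  As S_03 = (S_01 ∩ S_02) ∪ (S_13 ∩ S_23),
   the sequences (W_01, W_02, W_13, W_23) and (W_03, W_01, W_02, W_13, W_23)
   have the same pointwise stabilizer in G, and transvections of SL_d show
   that both are irredundant.  Extending one of them to an irredundant base
   and putting the same tail after the other gives irredundant bases of
   different sizes. *)

From mathcomp Require Import all_boot all_order all_algebra all_fingroup all_field.
From mathcomp Require Import zify.

Set Implicit Arguments. Unset Strict Implicit. Unset Printing Implicit Defensive.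
Import GRing.Theory.

Section Irredundant.
Variables (T : finType) (G : {group {perm T}}).

Definition irredundant (s : seq T) : Prop :=
  forall i, (i < size s)%N -> pstab G (take i.+1 s) \proper pstab G (take i s).

Lemma pstabE s : pstab G s = ('C_G([set x in s] | 'P))%g.
Proof.
apply/setP => g; rewrite !inE /=; congr (_ && _).
apply/allP/subsetP => [fix_s x | fix_s x xs].
  by rewrite !inE apermE => /fix_s.
by have := fix_s x; rewrite !inE apermE; apply.
Qed.

Lemma pstab_cat s t : pstab G (s ++ t) = pstab G s :&: pstab G t.
Proof. by apply/setP => g; rewrite !inE all_cat; case: (g \in G). Qed.

Lemma pstab_rcons_proper s x g :
  g \in pstab G s -> g x != x -> pstab G (rcons s x) \proper pstab G s.
Proof.
move=> gs gx; apply/properP; split; first by rewrite -cats1 pstab_cat subsetIl.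
by exists g; rewrite // -cats1 pstab_cat !inE /= (negbTE gx) !andbF.
Qed.

Lemma irredundant_rcons s x :
  irredundant (rcons s x) <->
  irredundant s /\ pstab G (rcons s x) \proper pstab G s.
Proof.
have take_sx i : (i <= size s)%N -> take i (rcons s x) = take i s.
  by move=> le_is; rewrite -cats1 takel_cat.
have take_last : take (size s).+1 (rcons s x) = rcons s x.
  by rewrite take_oversize // size_rcons.
rewrite /irredundant size_rcons; split=> [irr_sx | [irr_s prop_x] i].
  split=> [i lt_is|].
    by have := irr_sx i (ltnW lt_is); rewrite !take_sx // ltnW.
  by have := irr_sx _ (ltnSn _); rewrite take_last take_sx ?take_size.
rewrite ltnS leq_eqVlt => /predU1P[->|lt_is].
  by rewrite take_last take_sx ?take_size.
by rewrite !take_sx // ?irr_s // ltnW.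
Qed.

Lemma irredundant_nth_moved x0 s :
  (forall i, (i < size s)%N ->
     exists2 g, g \in pstab G (take i s) & g (nth x0 s i) != nth x0 s i) ->
  irredundant s.
Proof.
move=> moved i /[dup] lt_is /moved [g gs gx].
by rewrite (take_nth x0 lt_is); apply: pstab_rcons_proper gx.
Qed.

Lemma irredundant_extend s :
  irredundant s -> exists u, irredundant_base G (s ++ u).
Proof.
have [n] := ubnP #|pstab G s|; elim: n s => // n IHn s lt_sn irr_s.
have [triv|] := eqVneq (pstab G s) 1%g; first by exists [::]; rewrite cats0.
rewrite pstabE => /trivgPn[g gs ntg].
have /existsP[x gx] : [exists x, g x != x].
  apply: contraR ntg => /existsPn fix_g.
  by apply/eqP/permP => x; rewrite perm1; apply/eqP/negbNE.
have prop_x : pstab G (rcons s x) \proper pstab G s.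
  by apply: pstab_rcons_proper gx; rewrite pstabE.
have irr_sx : irredundant (rcons s x) by apply/irredundant_rcons.
have [|u base_u] := IHn _ _ irr_sx; first exact: leq_trans (proper_card prop_x) lt_sn.
by exists (x :: u); rewrite -cat_rcons.
Qed.

Lemma irredundant_cat_pstab s s' u :
  pstab G s = pstab G s' -> irredundant s' -> irredundant (s ++ u) ->
  irredundant (s' ++ u).
Proof.
move=> eq_ss' irr_s'; elim/last_ind: u => [|u x IHu]; first by rewrite !cats0.
rewrite -!rcons_cat => /irredundant_rcons [/IHu irr_u prop_x].
apply/irredundant_rcons; split=> //.
by move: prop_x; rewrite -!cats1 -!catA !(pstab_cat s) !(pstab_cat s') eq_ss'.
Qed.

Lemma not_IBIS_pstab_eq s s' :
  irredundant s -> irredundant s' -> pstab G s = pstab G s' ->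
  size s != size s' -> ~ IBIS G.
Proof.
move=> irr_s irr_s' eq_ss' neq_size IBIS_G.
have [u [irr_su triv_su]] := irredundant_extend irr_s.
have base_s'u : irredundant_base G (s' ++ u).
  split; first exact: irredundant_cat_pstab irr_su.
  by rewrite pstab_cat -eq_ss' -pstab_cat.
have := IBIS_G _ _ (conj irr_su triv_su) base_s'u.
by rewrite !size_cat => /addIn /eqP; rewrite (negbTE neq_size).
Qed.

Lemma pstab_cons_fixed s x :
  (forall g, g \in pstab G s -> g x = x) -> pstab G (x :: s) = pstab G s.
Proof.
move=> fix_x; rewrite -cat1s pstab_cat; apply/setIidPr/subsetP => g gs.
by rewrite !inE /= fix_x // eqxx !andbT; move: gs; rewrite inE => /andP[].
Qed.

End Irredundant.

Local Open Scope ring_scope.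

Section CoordinateSubspaces.
Variables (F : fieldType) (d : nat).
Implicit Types (S : {set 'I_d}) (A : 'M[F]_d).

Definition coord_mx S : 'M[F]_d := diag_mx (\row_i (i \in S)%:R).

Lemma sub_coord_mxP S (v : 'rV[F]_d) :
  reflect (forall m, m \notin S -> v 0 m = 0) (v <= coord_mx S)%MS.
Proof.
apply: (iffP submxP) => [[w ->] m mNS | v_S].
  by rewrite mul_mx_diag !mxE (negbTE mNS) mulr0.
exists v; apply/rowP => m; rewrite mul_mx_diag !mxE.
by have [|/v_S->] := boolP (m \in S); rewrite ?mulr1 ?mul0r.
Qed.

Lemma rank_coord_mx S : \rank (coord_mx S) = #|S|.
Proof.
pose f := @enum_val _ (mem S).
have eq_rowsub : (rowsub f (coord_mx S) :=: coord_mx S)%MS.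
  apply/eqmxP; rewrite rowsub_sub; apply/row_subP => j.
  have [jS|jNS] := boolP (j \in S).
    suff -> : row j (coord_mx S) = row (enum_rank_in jS j) (rowsub f (coord_mx S)).
      exact: row_sub.
    by rewrite row_rowsub /f enum_rankK_in.
  suff -> : row j (coord_mx S) = 0 by apply: sub0mx.
  by apply/rowP => m; rewrite !mxE (negbTE jNS) mul0rn.
suff /eqP <- : row_free (rowsub f (coord_mx S)) by rewrite eq_rowsub.
apply/row_freeP; exists (rowsub f (coord_mx S))^T; apply/matrixP => a b.
rewrite !mxE (bigD1 (f a)) //= big1 => [|m fa_m]; rewrite !mxE !enum_valP.
  by rewrite eqxx (inj_eq enum_val_inj) mulr1n mul1r addr0 eq_sym.
by rewrite eq_sym (negbTE fa_m) mulr0n mul0r.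
Qed.

Lemma map_coord_mx (sigma : {rmorphism F -> F}) S :
  map_mx sigma (coord_mx S) = coord_mx S.
Proof. by apply/matrixP => i j; rewrite !mxE rmorphMn rmorph_nat. Qed.

Lemma stable_coord_mxP S A :
  reflect (forall j m, j \in S -> m \notin S -> A j m = 0)
          (stablemx (coord_mx S) A).
Proof.
have entry j m : row j (coord_mx S *m A) 0 m = (j \in S)%:R * A j m.
  by rewrite /coord_mx mul_diag_mx !mxE.
apply: (iffP row_subP) => [stab j m jS mNS | stab j].
  by have /sub_coord_mxP/(_ m mNS) := stab j; rewrite entry jS mul1r.
apply/sub_coord_mxP => m mNS; rewrite entry.
by have [jS|_] := boolP (j \in S); [rewrite stab ?mulr0 | rewrite mul0r].
Qed.

Lemma stable_coord_mxI S T A :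
  stablemx (coord_mx S) A -> stablemx (coord_mx T) A ->
  stablemx (coord_mx (S :&: T)) A.
Proof.
move=> /stable_coord_mxP stS /stable_coord_mxP stT; apply/stable_coord_mxP.
move=> j m /setIP[jS jT]; rewrite inE negb_and => /orP[].
  exact: stS.
exact: stT.
Qed.

Lemma stable_coord_mxU S T A :
  stablemx (coord_mx S) A -> stablemx (coord_mx T) A ->
  stablemx (coord_mx (S :|: T)) A.
Proof.
move=> /stable_coord_mxP stS /stable_coord_mxP stT; apply/stable_coord_mxP.
move=> j m /setUP[jS|jT]; rewrite inE negb_or => /andP[mNS mNT].
  exact: stS.
exact: stT.
Qed.

Definition transvection (i j : 'I_d) : 'M[F]_d := 1%:M + delta_mx i j.

Lemma stable_coord_transvection S i j :
  stablemx (coord_mx S) (transvection i j) = ~~ ((i \in S) && (j \notin S)).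
Proof.
have entry a m :
    a \in S -> m \notin S -> transvection i j a m = ((a == i) && (m == j))%:R.
  by move=> aS mNS; rewrite !mxE; case: eqP aS mNS => [->->|]; rewrite ?add0r.
apply/stable_coord_mxP/idP => [stab | NiS a m aS mNS].
  apply/negP => /andP[iS jNS]; have /eqP := stab i j iS jNS.
  by rewrite entry // !eqxx mulr1n oner_eq0.
rewrite entry //; case: eqP aS => [-> iS|_]; last by [].
by case: eqP mNS => [-> jNS|_]; rewrite // iS jNS in NiS.
Qed.

Lemma det_transvection i j : i != j -> \det (transvection i j) = 1.
Proof.
wlog lt_ji : i j / (j < i)%N => [wlog_lt|] neq_ij.
  have [lt_ij|lt_ji|eq_ij] := ltngtP i j.
  - by rewrite -det_tr linearD /= trmx1 trmx_delta wlog_lt // eq_sym.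
  - exact: wlog_lt.
  - by rewrite (val_inj eq_ij) eqxx in neq_ij.
rewrite det_trig.
  rewrite big1 // => l _; rewrite !mxE eqxx.
  by case: (l =P i) => [->|_]; rewrite ?(negbTE neq_ij) /= ?mulr1n ?mulr0n ?addr0.
apply/is_trig_mxP => a b; rewrite !mxE.
case: (a =P b) => [-> | _]; first by rewrite ltnn.
case: (a =P i) => [-> | _]; case: (b =P j) => [-> | _] lt_ab;
  rewrite ?mulr0n ?addr0 //.
by rewrite ltnNge ltnW in lt_ji.
Qed.

Lemma transvection_unit i j : i != j -> transvection i j \in unitmx.
Proof. by move=> neq_ij; rewrite unitmxE det_transvection ?unitr1. Qed.

End CoordinateSubspaces.

Section SemilinearImage.
Variables (F : fieldType) (d : nat).
Implicit Types (A U : 'M[F]_d).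

Lemma slimage_id A U : slimage id A U = <<U *m A>>%MS.
Proof. by rewrite /slimage map_mx_id. Qed.

Lemma slimage_genmx (sigma : {rmorphism F -> F}) A U :
  map_mx sigma U = U -> slimage sigma A <<U>>%MS = <<U *m A>>%MS.
Proof.
move=> sigmaU; apply/eq_genmx/eqmxMr.
by apply: eqmx_trans (map_genmx _ _) _; rewrite sigmaU; exact: genmxE.
Qed.

Lemma genmx_stableP A U :
  A \in unitmx -> reflect (<<U *m A>>%MS = <<U>>%MS) (stablemx U A).
Proof.
move=> unitA; apply: (iffP idP) => [stab | /genmxP/andP[]//].
apply/genmxP; rewrite -(mxrank_leqif_eq stab).2.
by rewrite mxrankMfree ?row_free_unit.
Qed.

End SemilinearImage.

Section KSubspaces.
Variables (F : finFieldType) (d k : nat).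
Implicit Types (A : 'M[F]_d) (S : {set 'I_d}).

Lemma ksub_genmx (U : ksub F d k) : <<val U>>%MS = val U.
Proof. by case: U => M /= /andP[/eqP]. Qed.

Lemma ksub_rank (U : ksub F d k) : \rank (val U) = k.
Proof. by case: U => M /= /andP[_ /eqP]. Qed.

Lemma is_ksub_slimage_id A (U : ksub F d k) :
  A \in unitmx -> is_ksub k (slimage id A (val U)).
Proof.
move=> unitA; rewrite /is_ksub slimage_id genmx_id eqxx genmxE /=.
by rewrite mxrankMfree ?row_free_unit ?ksub_rank.
Qed.

Definition ksub_act A (unitA : A \in unitmx) (U : ksub F d k) : ksub F d k :=
  exist (@is_ksub F d k) _ (is_ksub_slimage_id U unitA).

Lemma ksub_act_inj A (unitA : A \in unitmx) : injective (ksub_act unitA).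
Proof.
move=> U V /(congr1 val); rewrite /= !slimage_id => /genmxP/eqmxP.
move/(eqmxMr (invmx A)); rewrite !mulmxK // => /eqmxP/genmxP eqUV.
by apply: val_inj; rewrite -ksub_genmx eqUV ksub_genmx.
Qed.

Definition ksub_perm A (unitA : A \in unitmx) : {perm ksub F d k} :=
  perm (@ksub_act_inj A unitA).

Lemma ksub_permE A (unitA : A \in unitmx) U :
  val (ksub_perm unitA U) = slimage id A (val U).
Proof. by rewrite permE. Qed.

Lemma ksub_perm_PSL A (unitA : A \in unitmx) :
  \det A = 1 -> ksub_perm unitA \in PSL_on F d k.
Proof.
move=> detA; rewrite inE; apply/existsP; exists A; rewrite detA eqxx /=.
by apply/forallP => U; rewrite ksub_permE.
Qed.

Lemma is_ksub_coord S : #|S| = k -> is_ksub k <<coord_mx F S>>%MS.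
Proof.
by move=> cardS; rewrite /is_ksub genmx_id eqxx genmxE rank_coord_mx cardS /=.
Qed.

Definition coord_ksub S (cardS : #|S| = k) : ksub F d k :=
  exist (@is_ksub F d k) _ (is_ksub_coord cardS).

Lemma coord_ksub_fixedE (g : {perm ksub F d k}) (sigma : {rmorphism F -> F})
    A S (cardS : #|S| = k) :
  A \in unitmx -> (forall U, val (g U) = slimage sigma A (val U)) ->
  (g (coord_ksub cardS) == coord_ksub cardS) = stablemx (coord_mx F S) A.
Proof.
move=> unitA gE; rewrite -val_eqE gE /= slimage_genmx ?map_coord_mx //.
exact/eqP/genmx_stableP.
Qed.

Definition transvection_perm (i j : 'I_d) (neq_ij : i != j) : {perm ksub F d k} :=
  ksub_perm (transvection_unit F neq_ij).

Lemma coord_ksub_transvection_fixedE i j (neq_ij : i != j) S (cardS : #|S| = k) :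
  (transvection_perm neq_ij (coord_ksub cardS) == coord_ksub cardS) =
  ~~ ((i \in S) && (j \notin S)).
Proof.
rewrite -(stable_coord_transvection F).
apply: (coord_ksub_fixedE (sigma := idfun)); first exact: transvection_unit.
exact: ksub_permE.
Qed.

End KSubspaces.

Lemma card_ord_count n (P : pred nat) :
  #|[set i : 'I_n | P i]| = count P (iota 0 n).
Proof.
by rewrite cardsE cardE /enum_mem -enumT size_filter -val_enum_ord count_map.
Qed.

Section Blocks.
Variables (d k : nat).

Definition block (a b : nat) : {set 'I_d} :=
  [set i : 'I_d | [|| i == a :> nat, i == b :> nat | 4 <= i < k.+2]%N].

Lemma card_block a b :
  (2 <= k)%N -> (k.+2 <= d)%N -> (a < b < 4)%N -> #|block a b| = k.
Proof.
move=> k_ge2 k2_le_d lt_ab4.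
set P := fun m => [|| m == a, m == b | 4 <= m < k.+2]%N.
rewrite (card_ord_count _ P).
have -> : d = (4 + (k - 2) + (d - k.+2))%N by lia.
rewrite !iotaD !count_cat add0n.
have -> : count P (iota 0 4) = 2 by rewrite /P /=; lia.
rewrite (@eq_in_count _ P predT) => [|m]; last by rewrite mem_iota /P /=; lia.
rewrite (@eq_in_count _ P pred0) => [|m]; last by rewrite mem_iota /P /=; lia.
by rewrite count_predT count_pred0 size_iota; lia.
Qed.

Lemma block03E :
  block 0 3 = (block 0 1 :&: block 0 2) :|: (block 1 3 :&: block 2 3).
Proof.
apply/setP => i; rewrite !inE.
by case: (nat_of_ord i) => [|[|[|[|m]]]] //=; rewrite !andbb orbb.
Qed.
End Blocks.

Section NotIBIS.
Variables (F : finFieldType) (d k : nat).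
Hypotheses (k_ge2 : (2 <= k)%N) (k2_le_d : (k.+2 <= d)%N).
Variable G : {group {perm ksub F d k}}.

Definition block_ksub a b (lt_ab4 : (a < b < 4)%N) : ksub F d k :=
  coord_ksub F (card_block k_ge2 k2_le_d lt_ab4).

Let d_ge4 : (4 <= d)%N. Proof. lia. Qed.
Let e n (lt_n4 : (n < 4)%N) : 'I_d := Ordinal (leq_trans lt_n4 d_ge4).

Let p01 := block_ksub (a := 0) (b := 1) isT.
Let p02 := block_ksub (a := 0) (b := 2) isT.
Let p03 := block_ksub (a := 0) (b := 3) isT.
Let p13 := block_ksub (a := 1) (b := 3) isT.
Let p23 := block_ksub (a := 2) (b := 3) isT.

Section Transvections.
Hypothesis PSL_G : (PSL_on F d k <| G)%g.

Lemma transvection_perm_in_G i j (neq_ij : i != j) :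
  transvection_perm F k neq_ij \in G.
Proof.
by apply: (subsetP (normal_sub PSL_G)); apply/ksub_perm_PSL/det_transvection.
Qed.

Local Notation t i j := (transvection_perm F k (i := @e i isT) (j := @e j isT) isT).

Lemma irredundant_chain : irredundant G [:: p01; p02; p13; p23].
Proof.
apply: (irredundant_nth_moved (x0 := p01)) => -[|[|[|[|[]]]]] //= _;
  [exists (t 0 2) | exists (t 0 1) | exists (t 1 0) | exists (t 2 0)];
  by rewrite ?inE ?transvection_perm_in_G /= ?coord_ksub_transvection_fixedE ?inE.
Qed.

Lemma irredundant_chain03 : irredundant G [:: p03; p01; p02; p13; p23].
Proof.
apply: (irredundant_nth_moved (x0 := p01)) => -[|[|[|[|[|[]]]]]] //= _;
  [ exists (t 0 1) | exists (t 0 3) | exists (t 2 1)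
  | exists (t 1 0) | exists (t 2 0) ];
  by rewrite ?inE ?transvection_perm_in_G /= ?coord_ksub_transvection_fixedE ?inE.
Qed.

End Transvections.

Lemma pstab_chain03 :
  (forall p, p \in G -> in_PGammaL p) ->
  pstab G [:: p03; p01; p02; p13; p23] = pstab G [:: p01; p02; p13; p23].
Proof.
move=> PGammaL_G; apply: pstab_cons_fixed => g.
case/setIP => /PGammaL_G[sigma [A [unitA gE]]].
rewrite inE /= !(coord_ksub_fixedE _ unitA gE) => /and5P[st01 st02 st13 st23 _].
apply/eqP; rewrite (coord_ksub_fixedE _ unitA gE) block03E.
by apply: stable_coord_mxU; apply: stable_coord_mxI.
Qed.

End NotIBIS.

Theorem lemma3p4 (F : finFieldType) (d k : nat)
  (hd : (3 <= d)%N) (hk2 : (2 <= k)%N) (hkd : (k.*2 <= d)%N)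
  (G : {group {perm ksub F d k}})
  (hN : (PSL_on F d k <| G)%g)
  (hG : forall p, p \in G -> in_PGammaL p) :
  ~ IBIS G.
Proof.
have k2_le_d : (k.+2 <= d)%N by lia.
have eq_pstab := pstab_chain03 hk2 k2_le_d hG.
exact: not_IBIS_pstab_eq (irredundant_chain03 hN) (irredundant_chain hN) eq_pstab isT.
Qed.
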